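(* Let $\mu$ be a stationary ergodic, elliptic and non-degenerate probability measure on $\Omega$ with $\mathbb P^1(S_+)>0$. Let $\epsilon>0$ and let $y\in\mathbb Z_+$ satisfy $\mathbb P^y(S_+)>1-\epsilon$. Then there exist integers $n_1<n_2<\cdots$ such that $\mathbb P^1(Z^-_{n_i}>y)<3\epsilon$ for all $i\ge1$.
   Context: Notation: $\mathbb N=\{1,2,\dots\}$, $\mathbb Z_+=\{0,1,2,\dots\}$. Cookie environments $\omega\in\Omega=[0,1]^{\mathbb Z\times\mathbb N}$; shift $(\theta\omega)(x,n)=\omega(x+1,n)$; $\mu$ stationary ergodic means $\theta$-invariant and ergodic; elliptic means $\mu((0,1)^{\mathbb Z\times\mathbb N})=1$. Random arrow environment: $a(x,n)=\mathbf 1_{\{u(x,n)<\omega(x,n)\}}$ with $u(x,n)$ i.i.d. Uniform$[0,1]$ independent of $\omega\sim\mu$; $\mathbb P$ denotes the joint law of $(\omega,u)$. A sequence $b\in\{0,1\}^{\mathbb N}$ is non-degenerate if $b(i)\ne b(i+1)$ for infinitely many $i$; $\mu$ is non-degenerate if $\mathbb P$-a.s. every $a(x,\cdot)$ is non-degenerate. For non-degenerate $b$: $U^+_b(0)=0$ and for $x\ge1$, $U^+_b(x)$ is the number of indices $i$ with $b(i)=1$ preceding the $x$-th index $j$ with $b(j)=0$; $U^-_b$ is defined the same way with $0$ and $1$ exchanged. For $y\in\mathbb Z_+$: $Z^+_0=y$, $Z^+_n=U^+_{a(n-1,\cdot)}(Z^+_{n-1})$; $Z^-_0=y$, $Z^-_n=U^-_{a(1-n,\cdot)}(Z^-_{n-1})$.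 $\mathbb P^y$ denotes $\mathbb P$ applied to events about $Z^\pm$ with initial value $y$. $S_+=\{Z^+_n>0\ \forall n\ge0\}$. *)

From HB Require Import structures.
From mathcomp Require Import all_boot all_order all_algebra.
From mathcomp Require Import all_classical all_reals all_analysis.
Set Implicit Arguments. Unset Strict Implicit. Unset Printing Implicit Defensive.
Import Order.TTheory GRing.Theory Num.Theory.
Local Open Scope classical_set_scope.
Local Open Scope ring_scope.

(* Cookie environments: Omega = [0,1]^(Z x N).  The second coordinate
   n : nat represents the paper's index n+1 \in N = {1,2,...}. *)
Definition env (R : realType) := int -> nat -> R.

Definition env_shift (R : realType) (w : env R) : env R := fun x n => w (x + 1)%R n.

Definition cylinders (R : realType) : set (set (env R)) :=
  [set E | exists (x : int) (n : nat) (B : set R),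
      measurable B /\ E = [set w : env R | B (w x n)]].
Definition env_measurable (R : realType) (A : set (env R)) : Prop :=
  smallest (sigma_algebra setT) (@cylinders R) A.

(* arrow sequences b : nat -> bool (index i stands for the paper's i+1) *)
Definition nondeg_seq (b : nat -> bool) : Prop :=
  forall N, exists i, (N <= i)%N /\ b i != b i.+1.

Definition count_val (b : nat -> bool) (v : bool) (j : nat) : nat :=
  count (fun i => b i == v) (iota 0 j).

Definition kth_index (b : nat -> bool) (v : bool) (x : nat) : nat :=
  xget 0%N [set j | b j = v /\ count_val b v j = x.-1].

Definition Uplus (b : nat -> bool) (x : nat) : nat :=
  if x == 0%N then 0%N else count_val b true (kth_index b false x).
Definition Uminus (b : nat -> bool) (x : nat) : nat :=
  if x == 0%N then 0%N else count_val b false (kth_index b true x).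

Definition arrows (R : realType) (w u : env R) : int -> nat -> bool :=
  fun x n => u x n < w x n.

Fixpoint Zplus (a : int -> nat -> bool) (y : nat) (n : nat) : nat :=
  match n with
  | 0 => y
  | m.+1 => Uplus (a (m%:Z)) (Zplus a y m)
  end.
Fixpoint Zminus (a : int -> nat -> bool) (y : nat) (n : nat) : nat :=
  match n with
  | 0 => y
  | m.+1 => Uminus (a (- (m%:Z))%R) (Zminus a y m)
  end.

Definition Splus (a : int -> nat -> bool) (y : nat) : Prop :=
  forall n, (0 < Zplus a y n)%N.

From HB Require Import structures.
From mathcomp Require Import all_boot all_order all_algebra.
From mathcomp Require Import all_classical all_reals all_analysis.
From mathcomp Require Import zify lra.
Import Order.TTheory GRing.Theory Num.Theory.
Local Open Scope classical_set_scope.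
Local Open Scope ring_scope.
Set Implicit Arguments. Unset Strict Implicit. Unset Printing Implicit Defensive.

(* A duality between the two branching processes.  If x < U^-_b(z),
   then the x-th 0 of b comes before the z-th 1, so U^+_b(x) < z.  Reading the
   arrows at the sites 0, -1, ..., -n in reverse order, this shows that on the
   event {Z^-_{n+1} > y} (started from 1), the process Z^+ started from y in the
   environment shifted by -n is extinct at time n+1.  Stationarity of mu and the
   i.i.d. uniform u make the shifted arrows equal in law to the original ones, so
   P^1(Z^-_{n+1} > y) <= 1 - P^y(S_+) < eps for every n, and n_i = i + 1 works. *)

Section arrow_counts.
Variable b : nat -> bool.

Lemma count_valS v j : count_val b v j.+1 = (count_val b v j + (b j == v))%N.
Proof. by rewrite /count_val -addn1 iotaD count_cat /= addn0 add0n. Qed.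

Lemma leq_count_val v {i j} : (i <= j)%N -> (count_val b v i <= count_val b v j)%N.
Proof.
move=> /subnK <-; elim: (j - i)%N => [|k IH] //=.
by rewrite addSn count_valS (leq_trans IH) // leq_addr.
Qed.

Definition kth_occurrence v k j := b j = v /\ count_val b v j = k.-1.

Lemma count_val_ltn {v i j} : b i = v -> (i < j)%N ->
  (count_val b v i < count_val b v j)%N.
Proof.
by move=> bi lt; have := leq_count_val v lt; rewrite count_valS bi eqxx addn1.
Qed.

Lemma kth_occurrence_uniq v k j1 j2 :
  kth_occurrence v k j1 -> kth_occurrence v k j2 -> j1 = j2.
Proof.
move=> [b1 c1] [b2 c2]; case: (ltngtP j1 j2) => // lt.
  by have := count_val_ltn b1 lt; rewrite c1 c2 ltnn.
by have := count_val_ltn b2 lt; rewrite c1 c2 ltnn.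
Qed.

Hypothesis b_nondeg : nondeg_seq b.

Lemma nondeg_seq_recurrent v N : exists2 j, (N <= j)%N & b j = v.
Proof.
have [i [Ni ne]] := b_nondeg N.
case: (b i =P v) => [|bi]; first by exists i.
by exists i.+1; [exact: leqW | move: ne bi; case: (b i); case: (b i.+1); case: v].
Qed.

Lemma count_val_unbounded v m : exists j, (m <= count_val b v j)%N.
Proof.
elim: m => [|m [j Hj]]; first by exists 0%N.
have [j' jj' bj'] := nondeg_seq_recurrent v j.
exists j'.+1; rewrite count_valS bj' eqxx addn1 ltnS.
exact: leq_trans Hj (leq_count_val v jj').
Qed.

Lemma kth_occurrence_exists v k : (0 < k)%N -> exists j, kth_occurrence v k j.
Proof.
move=> k_gt0; case: (ex_minnP (count_val_unbounded v k)) => j.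
case: j => [|j]; first by rewrite /count_val /= leqn0 => /eqP k0; rewrite k0 in k_gt0.
move=> kj jmin; have lt_j : (count_val b v j < k)%N.
  by rewrite ltnNge; apply/negP => /jmin; rewrite ltnn.
move: kj; rewrite count_valS; case: (b j =P v) => bj /= kj; last first.
  by move: (leq_trans lt_j kj); rewrite addn0 ltnn.
by exists j; split => //; lia.
Qed.

Lemma kth_indexP v k : (0 < k)%N -> kth_occurrence v k (kth_index b v k).
Proof.
by move=> /(kth_occurrence_exists v) ex; apply: (@xgetPex _ 0%N (kth_occurrence v k)).
Qed.

Lemma count_val_geq_kth v k i : (0 < k)%N ->
  (k <= count_val b v i)%N = (kth_index b v k < i)%N.
Proof.
move=> k_gt0; have [bj cj] := kth_indexP v k_gt0; set j := kth_index b v k in bj cj *.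
case: (ltnP j i) => ji; first by have := count_val_ltn bj ji; rewrite cj; lia.
by apply/negbTE; rewrite -ltnNge (leq_ltn_trans (leq_count_val v ji)) // cj; lia.
Qed.

Lemma Uplus_lt_of_lt_Uminus x z : (x < Uminus b z)%N -> (Uplus b x < z)%N.
Proof.
rewrite /Uminus /Uplus; case: eqP => [//|/eqP z0].
case: eqP => [_ _|/eqP x0 /ltnW lt_x]; first by rewrite lt0n.
rewrite ltnNge count_val_geq_kth ?lt0n // -leqNgt.
by move: lt_x; rewrite count_val_geq_kth ?lt0n // => /ltnW.
Qed.

End arrow_counts.

Section duality.
Variables (a : int -> nat -> bool) (y n : nat).
Hypothesis a_nondeg : forall x, nondeg_seq (a x).
Hypothesis y_lt_Zminus : (y < Zminus a 1 n.+1)%N.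

Let a_shift x := a (x - n%:Z).

Lemma Zplus_shift_lt_Zminus j : (j <= n.+1)%N ->
  (Zplus a_shift y j < Zminus a 1 (n.+1 - j))%N.
Proof.
elim: j => [|j IH] le_jn; first by rewrite subn0.
have le_jn' : (j <= n)%N by [].
move: (IH (ltnW le_jn)); rewrite subSS subSn //= => lt_j.
have -> : a_shift j = a (- (n - j)%N%:Z) by rewrite /a_shift; congr a; lia.
exact: (Uplus_lt_of_lt_Uminus (a_nondeg _) lt_j).
Qed.

Lemma Zplus_shift_extinct : Zplus a_shift y n.+1 = 0%N.
Proof.
apply/eqP; rewrite -leqn0 -ltnS.
by have := Zplus_shift_lt_Zminus (leqnn n.+1); rewrite subnn.
Qed.

End duality.

Section level_measurable.
Context {d : measure_display} {X : measurableType d}.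

Lemma measurable_exists_count (I : countType) (F : I -> set X) :
  (forall i, measurable (F i)) -> measurable [set x | exists i, F i x].
Proof.
move=> mF; have -> : [set x | exists i, F i x] =
    \bigcup_n (if unpickle n is Some i then F i else set0).
  apply/seteqP; split => x /=; first by move=> [i Fi]; exists (pickle i); rewrite ?pickleK.
  by move=> [n _]; case: (unpickle n) => // i Fi; exists i.
by apply: bigcupT_measurable => n; case: (unpickle n).
Qed.

Lemma measurable_forall_count (I : countType) (F : I -> set X) :
  (forall i, measurable (F i)) -> measurable [set x | forall i, F i x].
Proof.
move=> mF; have -> : [set x | forall i, F i x] = ~` [set x | exists i, (~` F i) x].
  apply/seteqP; split => x /=; first by move=> h [i]; apply.
  by move=> h i; apply: contrapT => Fi; apply: h; exists i.
by apply/measurableC/measurable_exists_count => i; apply: measurableC.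
Qed.

(* Measurability with respect to the discrete sigma-algebra of the codomain. *)
Definition level_measurable (J : Type) (f : X -> J) := forall j, measurable [set x | f x = j].

Lemma level_measurable_cst (J : Type) (c : J) : level_measurable (fun _ => c).
Proof.
move=> j; case: (pselect (c = j)) => [<-|cj].
  by rewrite (_ : [set _ | c = c] = setT) //; apply/seteqP.
by rewrite (_ : [set _ | c = j] = set0) //; apply/seteqP; split.
Qed.

Lemma level_measurable_bool (g : X -> bool) :
  measurable [set x | g x] -> level_measurable g.
Proof.
move=> mg [|]; first by have -> : [set x | g x = true] = [set x | g x] by [].
have -> : [set x | g x = false] = ~` [set x | g x].
  by apply/seteqP; split => x /=; case: (g x).
exact: measurableC.
Qed.

Lemma level_measurable_dep (I : countType) (J : Type) (f : X -> I) (g : I -> X -> J) :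
  level_measurable f -> (forall i, level_measurable (g i)) ->
  level_measurable (fun x => g (f x) x).
Proof.
move=> mf mg j; have -> : [set x | g (f x) x = j] =
    [set x | exists i, ([set x | f x = i] `&` [set x | g i x = j]) x].
  by apply/seteqP; split => x /=; [exists (f x) | move=> [i [/= -> ->]]].
by apply: measurable_exists_count => i; exact: measurableI (mf i) (mg i j).
Qed.

Lemma level_measurable_comp (I : countType) (J : Type) (h : I -> J) (f : X -> I) :
  level_measurable f -> level_measurable (fun x => h (f x)).
Proof.
by move=> mf; apply: (level_measurable_dep (g := fun i _ => h i) mf) => i;
  apply: level_measurable_cst.
Qed.

Lemma level_measurable2 (I1 I2 : countType) (J : Type) (h : I1 -> I2 -> J)
    (f1 : X -> I1) (f2 : X -> I2) :
  level_measurable f1 -> level_measurable f2 -> level_measurable (fun x => h (f1 x) (f2 x)).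
Proof.
move=> mf1 mf2; apply: (level_measurable_dep (g := fun i x => h i (f2 x)) mf1) => i.
exact: level_measurable_comp.
Qed.

Lemma measurable_level_pred (I : countType) (f : X -> I) (Q : I -> Prop) :
  level_measurable f -> measurable [set x | Q (f x)].
Proof.
move=> mf; have -> : [set x | Q (f x)] = [set x | exists i, (Q i /\ f x = i)].
  by apply/seteqP; split => x /=; [exists (f x) | move=> [i [Qi ->]]].
apply: measurable_exists_count => i; case: (pselect (Q i)) => Qi.
  by rewrite (_ : (fun x => _) = [set x | f x = i]) //; apply/seteqP; split => x [].
by rewrite (_ : (fun x => _) = set0) //; apply/seteqP; split => x [].
Qed.

Lemma level_measurable_xget (I : countType) (i0 : I) (P : I -> X -> Prop) :
  (forall x i j, P i x -> P j x -> i = j) -> (forall i, measurable [set x | P i x]) ->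
  level_measurable (fun x => xget i0 [set i | P i x]).
Proof.
move=> P_uniq mP j; have -> : [set x | xget i0 [set i | P i x] = j] =
    [set x | P j x] `|` ([set x | forall i, ~ P i x] `&` [set _ | i0 = j]).
  apply/seteqP; split => x /=.
    case: (pselect (exists i, P i x)) => [[i Pi]|/forallNP noP] <-.
      by left; rewrite (@xget_unique _ i0 [set i | P i x] i Pi) // => i' /P_uniq; apply.
    by right; split=> //; rewrite xgetPN.
  case=> [Pj|[noP <-]]; last exact: xgetPN.
  by rewrite (@xget_unique _ i0 [set i | P i x] j Pj) // => i /P_uniq; apply.
apply: measurableU; first exact: mP.
apply: measurableI; last exact: level_measurable_cst.
by apply: measurable_forall_count => i; apply/measurableC/mP.
Qed.

End level_measurable.

Lemma le_measure_setU_null d (X : measurableType d) (R : realType)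
    (mu : {measure set X -> \bar R}) (A B N : set X) :
  measurable A -> measurable B -> measurable N -> mu N = 0%E ->
  A `<=` B `|` N -> (mu A <= mu B)%E.
Proof.
move=> mA mB mN N0 AB; rewrite -(measureU0 mB mN N0).
by apply: le_measure => //; rewrite inE //; exact: measurableU.
Qed.

Section arrow_measurability.
Context {d : measure_display} {X : measurableType d} (a : X -> int -> nat -> bool).
Hypothesis a_meas : forall x n, measurable [set p | a p x n].

Lemma count_val_level x v j : level_measurable (fun p => count_val (a p x) v j).
Proof.
elim: j => [|j IH]; first exact: level_measurable_cst.
under eq_fun do rewrite count_valS.
apply: level_measurable2 IH _.
exact: (level_measurable_comp (fun c => nat_of_bool (c == v)) (level_measurable_bool (a_meas x j))).
Qed.

Lemma kth_index_level x v k : level_measurable (fun p => kth_index (a p x) v k).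
Proof.
apply: level_measurable_xget => [p i j|j]; first exact: kth_occurrence_uniq.
apply: (measurable_level_pred (f := fun p => (a p x j, count_val (a p x) v j))
  (fun c => c.1 = v /\ c.2 = k.-1)).
by apply: level_measurable2; [exact: level_measurable_bool | exact: count_val_level].
Qed.

Lemma Uplus_level x k : level_measurable (fun p => Uplus (a p x) k).
Proof.
rewrite /Uplus; case: eqP => _; first exact: level_measurable_cst.
exact: (level_measurable_dep (kth_index_level x false k) (fun j => count_val_level x true j)).
Qed.

Lemma Uminus_level x k : level_measurable (fun p => Uminus (a p x) k).
Proof.
rewrite /Uminus; case: eqP => _; first exact: level_measurable_cst.
exact: (level_measurable_dep (kth_index_level x true k) (fun j => count_val_level x false j)).
Qed.

Lemma Zplus_level y n : level_measurable (fun p => Zplus (a p) y n).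
Proof.
elim: n => [|n IH] /=; first exact: level_measurable_cst.
exact: (level_measurable_dep IH (Uplus_level _)).
Qed.

Lemma Zminus_level y n : level_measurable (fun p => Zminus (a p) y n).
Proof.
elim: n => [|n IH] /=; first exact: level_measurable_cst.
exact: (level_measurable_dep IH (Uminus_level _)).
Qed.

Lemma measurable_nondeg : measurable [set p | forall x, nondeg_seq (a p x)].
Proof.
apply: measurable_forall_count => x; apply: measurable_forall_count => N.
apply: measurable_exists_count => i.
apply: (measurable_level_pred (f := fun p => (a p x i, a p x i.+1))
  (fun c => (N <= i)%N /\ c.1 != c.2)).
by apply: level_measurable2; exact: level_measurable_bool.
Qed.

Lemma measurable_Splus y : measurable [set p | Splus (a p) y].
Proof.
apply: measurable_forall_count => n.
exact: (measurable_level_pred (fun c => (0 < c)%N) (Zplus_level y n)).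
Qed.

End arrow_measurability.

(* A copy of [env R] with the pointed structure that [g_sigma_algebraType] requires. *)
Definition penv (R : realType) := env R.
HB.instance Definition _ (R : realType) := Choice.on (penv R).
HB.instance Definition _ (R : realType) := isPointed.Build (penv R) (fun _ _ => 0).

Section joint_space.
Variable R : realType.

Definition env_space := g_sigma_algebraType (@cylinders R : set (set (penv R))).

Definition joint_cylinder (A : set (env R)) (s : seq (int * nat)) (B : int * nat -> set R) :
    set (env R * env R) :=
  [set p | A p.1 /\ forall c, c \in s -> B c (p.2 c.1 c.2)].

(* The rectangles on which the law of (omega, u) is prescribed by the
   independence hypothesis; they form a pi-system generating the product
   sigma-algebra. *)
Definition joint_cylinders : set (set (penv R * penv R)) :=
  [set F | exists A s B, [/\ env_measurable A, uniq s,
    forall c, c \in s -> measurable (B c) & F = joint_cylinder A s B]].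

Definition joint_space := g_sigma_algebraType joint_cylinders.

Lemma joint_cylinders_setI_closed : setI_closed joint_cylinders.
Proof.
move=> _ _ [A1 [s1 [B1 [mA1 u1 mB1 ->]]]] [A2 [s2 [B2 [mA2 u2 mB2 ->]]]].
pose Bs (s : seq (int * nat)) (B : int * nat -> set R) c := if c \in s then B c else [set: R].
exists (A1 `&` A2), (undup (s1 ++ s2)), (fun c => Bs s1 B1 c `&` Bs s2 B2 c); split.
- exact: (@measurableI _ env_space _ _ mA1 mA2).
- exact: undup_uniq.
- by move=> c _; apply: measurableI; rewrite /Bs; case: ifP => // c_s; [exact: mB1 | exact: mB2].
apply/seteqP; split => p /=.
  move=> [[A1p B1p] [A2p B2p]]; split => // c _.
  by split; rewrite /Bs; case: ifP => // c_s; [exact: B1p | exact: B2p].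
move=> [[A1p A2p] Bp]; split; split => // c c_s.
  by have [] := Bp c; rewrite ?mem_undup ?mem_cat ?c_s ?orbT /Bs ?c_s.
by have [] := Bp c; rewrite ?mem_undup ?mem_cat ?c_s ?orbT /Bs ?c_s.
Qed.

Lemma joint_cylinder_coordinate_env (B : set R) x n :
  measurable B -> joint_cylinders [set p | B (p.1 x n)].
Proof.
move=> mB; exists [set w | B (w x n)], [::], (fun _ => set0); split => //.
  by apply: sub_sigma_algebra; exists x, n, B.
by apply/seteqP; split => p /=; [move=> Bp; split | case].
Qed.

Lemma joint_cylinder_coordinate_unif (B : set R) x n :
  measurable B -> joint_cylinders [set p | B (p.2 x n)].
Proof.
move=> mB; exists setT, [:: (x, n)], (fun _ => B); split => //.
  exact: (@measurableT _ env_space).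
apply/seteqP; split => p /=; first by move=> Bp; split => // c; rewrite inE => /eqP ->.
by move=> [_ Bp]; exact: (Bp (x, n) (mem_head _ _)).
Qed.

Lemma measurable_arrows x n : measurable [set p : joint_space | arrows p.1 p.2 x n].
Proof.
have -> : [set p : joint_space | arrows p.1 p.2 x n] = [set p | exists q : rat,
    ([set p | p.2 x n \in `]-oo, ratr q[] `&` [set p | p.1 x n \in `]ratr q, +oo[]) p].
  apply/seteqP; split => p /=.
    move=> /rat_in_itvoo [q]; rewrite in_itv /= => /andP[lt1 lt2].
    by exists q; split; rewrite /= in_itv /= ?lt1 ?lt2.
  by move=> [q []]; rewrite !in_itv /= andbT; exact: lt_trans.
apply: measurable_exists_count => q; apply: measurableI; apply: sub_sigma_algebra.
  exact: joint_cylinder_coordinate_unif (measurable_itv _).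
exact: joint_cylinder_coordinate_env (measurable_itv _).
Qed.

End joint_space.

Definition shift_env {R : realType} (K : int) (w : env R) : env R := fun x n => w (x + K) n.
Definition shift_site (K : int) (c : int * nat) : int * nat := (c.1 + K, c.2).
Definition shift_joint {R : realType} (K : int) (p : joint_space R) : joint_space R :=
  (shift_env K p.1, shift_env K p.2).

Lemma shift_env0 {R : realType} (w : env R) : shift_env 0 w = w.
Proof. by apply/funext => x; apply/funext => m; rewrite /shift_env addr0. Qed.

Lemma shift_envD {R : realType} K1 K2 (w : env R) :
  shift_env K1 (shift_env K2 w) = shift_env (K1 + K2) w.
Proof. by apply/funext => x; apply/funext => m; rewrite /shift_env addrA. Qed.

Lemma shift_siteK K : cancel (shift_site K) (shift_site (- K)).
Proof. by case=> x m; rewrite /shift_site /= addrK. Qed.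

Section shift_measurability.
Variable R : realType.

Lemma measurable_shift_env K : measurable_fun setT (shift_env K : env_space R -> env_space R).
Proof.
apply: (measurability (@cylinders R : set (set (env_space R)))) => //.
move=> _ [_ [x [n [B [mB ->]]]] <-].
by rewrite setTI; apply: sub_sigma_algebra; exists (x + K), n, B.
Qed.

Lemma env_measurable_shift K (A : set (env R)) :
  env_measurable A -> env_measurable [set w | A (shift_env K w)].
Proof. by move=> mA; have := measurable_shift_env K measurableT mA; rewrite setTI. Qed.

Lemma shift_joint_cylinder K A s (B : int * nat -> set R) :
  shift_joint K @^-1` joint_cylinder A s B =
  joint_cylinder [set w | A (shift_env K w)] (map (shift_site K) s) (B \o shift_site (- K)).
Proof.
apply/seteqP; split => p /= [Ap Bp]; split => // c.
  by move=> /mapP [c0 c0_s ->]; rewrite /= shift_siteK; exact: Bp.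
by move=> c_s; have := Bp _ (map_f (shift_site K) c_s); rewrite /= shift_siteK.
Qed.

Lemma joint_cylinders_shift K (F : set (joint_space R)) :
  joint_cylinders F -> joint_cylinders (shift_joint K @^-1` F).
Proof.
move=> [A [s [B [mA us mB ->]]]]; rewrite shift_joint_cylinder.
exists [set w | A (shift_env K w)], (map (shift_site K) s), (B \o shift_site (- K)).
split=> //; first exact: env_measurable_shift.
  by rewrite map_inj_uniq //; exact: can_inj (shift_siteK K).
by move=> c /mapP [c0 c0_s ->]; rewrite /= shift_siteK; exact: mB.
Qed.

Lemma measurable_shift_joint K : measurable_fun setT (@shift_joint R K).
Proof.
apply: (measurability (@joint_cylinders R : set (set (joint_space R)))) => //.
move=> _ [F GF <-]; rewrite setTI; apply: sub_sigma_algebra.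
exact: joint_cylinders_shift.
Qed.

End shift_measurability.

Section joint_law.
Variables (d : measure_display) (T : measurableType d) (R : realType)
  (P : probability T R) (om u : T -> env R).
Hypothesis om_meas : forall x n, measurable_fun setT (fun t => om t x n).
Hypothesis u_meas : forall x n, measurable_fun setT (fun t => u t x n).
Hypothesis u_law : forall (A : set (env R)) (s : seq (int * nat)) (B : int * nat -> set R),
  env_measurable A -> uniq s -> (forall c, c \in s -> measurable (B c)) ->
  P [set t | A (om t) /\ forall c, c \in s -> B c (u t c.1 c.2)]
  = (P (om @^-1` A) * \big[*%E/1%E]_(c <- s) (@lebesgue_measure R) (B c `&` `[0%R, 1%R]))%E.
Hypothesis stat : forall A : set (env R), env_measurable A ->
  P (om @^-1` [set w : env R | A (env_shift w)]) = P (om @^-1` A).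

Definition joint_env (t : T) : joint_space R := (om t, u t).

Lemma measurable_om : measurable_fun setT (om : T -> env_space R).
Proof.
apply: (measurability (@cylinders R : set (set (env_space R)))) => //.
by move=> _ [_ [x [n [B [mB ->]]]] <-]; exact: om_meas.
Qed.

Lemma measurable_joint_env : measurable_fun setT joint_env.
Proof.
apply: (measurability (@joint_cylinders R : set (set (joint_space R)))) => //.
move=> _ [_ [A [s [B [mA us mB ->]]]] <-]; rewrite setTI.
have -> : joint_env @^-1` joint_cylinder A s B = om @^-1` A `&`
    [set t | forall c, (if c \in s then [set t | B c (u t c.1 c.2)] else setT) t].
  apply/seteqP; split => t /= [Aot Bt]; split => // c; first by case: ifP => // /Bt.
  by move=> c_s; have := Bt c; rewrite c_s.
apply: measurableI; first by rewrite -[_ @^-1` _]setTI; exact: measurable_om.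
apply: measurable_forall_count => c; case: ifP => // c_s.
by rewrite -[X in measurable X]setTI; exact: u_meas (mB c c_s).
Qed.

Lemma measurable_joint_env_preimage (F : set (joint_space R)) :
  measurable F -> measurable (joint_env @^-1` F).
Proof. by move=> mF; rewrite -[_ @^-1` _]setTI; exact: measurable_joint_env. Qed.

Lemma stationary_shift_nat (n : nat) (A : set (env R)) : env_measurable A ->
  P (om @^-1` [set w | A (shift_env n%:Z w)]) = P (om @^-1` A).
Proof.
elim: n A => [|n IH] A mA; first by under eq_fun do rewrite shift_env0.
have -> : [set w | A (shift_env n.+1%:Z w)] =
    [set w | [set w | A (shift_env n%:Z w)] (env_shift w)].
  by apply/funext => w /=; rewrite (_ : env_shift w = shift_env 1 w) // shift_envD addrC -intS.
by rewrite stat ?IH //; exact: env_measurable_shift.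
Qed.

Lemma stationary_shift (K : int) (A : set (env R)) : env_measurable A ->
  P (om @^-1` [set w | A (shift_env K w)]) = P (om @^-1` A).
Proof.
case: K => n mA; first exact: stationary_shift_nat.
rewrite -(stationary_shift_nat n.+1 (env_measurable_shift (Negz n) mA)).
by congr (P (om @^-1` _)); apply/funext => w /=; rewrite shift_envD NegzE addNr shift_env0.
Qed.

Lemma joint_law_shift (K : int) (F : set (joint_space R)) : measurable F ->
  P (joint_env @^-1` (shift_joint K @^-1` F)) = P (joint_env @^-1` F).
Proof.
move=> mF; have m_ev := measurable_joint_env.
(* Both measurability facts are picked up by the measure instance of [pushforward]. *)
have m_shift_ev : measurable_fun setT (shift_joint K \o joint_env).
  exact: measurableT_comp (measurable_shift_joint K) m_ev.
change (pushforward P (shift_joint K \o joint_env) F = pushforward P joint_env F).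
apply: (g_sigma_algebra_measure_unique
  (@joint_cylinders R : set (set (joint_space R))) _ (fun=> setT) _ _
  (pushforward P (shift_joint K \o joint_env)) (pushforward P joint_env)).
- by move=> G JG; exact: sub_sigma_algebra.
- move=> _; exists setT, [::], (fun=> setT); split => //.
    exact: (@measurableT _ (env_space R)).
  by apply/seteqP; split => p.
- by rewrite bigcup_const.
- exact: joint_cylinders_setI_closed.
- move=> _ [A [s [B [mA us mB ->]]]].
  change (P (joint_env @^-1` (shift_joint K @^-1` joint_cylinder A s B)) =
    P (joint_env @^-1` joint_cylinder A s B)).
  rewrite shift_joint_cylinder.
  rewrite [LHS]u_law ?[RHS]u_law //; first last.
  + by move=> c /mapP [c0 c0_s ->]; rewrite /= shift_siteK; exact: mB.
  + by rewrite map_inj_uniq //; exact: can_inj (shift_siteK K).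
  + exact: env_measurable_shift.
  rewrite stationary_shift // big_map; congr (_ * _)%E.
  by apply: eq_bigr => c _; rewrite /= shift_siteK.
- by move=> _; exact: le_lt_trans (probability_le1 P measurableT) (ltry 1).
- exact: mF.
Qed.

Hypothesis nondeg : P [set t | forall x, nondeg_seq (arrows (om t) (u t) x)] = 1%E.

Lemma Zminus_gt_le_extinction y n :
  (P [set t | (y < Zminus (arrows (om t) (u t)) 1 n.+1)%N] <=
   P (~` [set t | Splus (arrows (om t) (u t)) y]))%E.
Proof.
have m_ev := measurable_joint_env_preimage.
have m_arr := @measurable_arrows R.
pose Extinct := [set p : joint_space R | Zplus (fun x => arrows p.1 p.2 x) y n.+1 = 0%N].
have mExtinct : measurable Extinct := Zplus_level m_arr y n.+1 0%N.
have mShifted : measurable (joint_env @^-1` (shift_joint (- n%:Z) @^-1` Extinct)).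
  by apply: m_ev; rewrite -[_ @^-1` _]setTI; exact: measurable_shift_joint.
have mNonDeg := m_ev _ (measurable_nondeg m_arr).
have null_degenerate : P (~` [set t | forall x, nondeg_seq (arrows (om t) (u t) x)]) = 0%E.
  by rewrite probability_setC ?nondeg ?subee.
have m_Zminus := m_ev _ (measurable_level_pred (fun c => (y < c)%N) (Zminus_level m_arr 1 n.+1)).
have le_shifted : (P [set t | (y < Zminus (arrows (om t) (u t)) 1 n.+1)%N] <=
    P (joint_env @^-1` (shift_joint (- n%:Z) @^-1` Extinct)))%E.
  apply: le_measure_setU_null m_Zminus mShifted (measurableC mNonDeg) null_degenerate _.
  move=> t y_lt; case: (pselect (forall x, nondeg_seq (arrows (om t) (u t) x))) => [nd|];
    [left | by right].
  exact: Zplus_shift_extinct nd y_lt.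
rewrite joint_law_shift // in le_shifted; apply: le_trans le_shifted _.
apply: le_measure; rewrite ?inE; first exact: m_ev.
  exact/measurableC/(m_ev _ (measurable_Splus m_arr y)).
by move=> t ext surv; have := surv n.+1; rewrite [Zplus _ _ _]ext.
Qed.

End joint_law.
Theorem lemma4p7 (d : measure_display) (T : measurableType d) (R : realType)
  (P : probability T R) (om u : T -> env R)
  (* omega is an Omega-valued random variable with law mu *)
  (om_meas : forall x n, measurable_fun setT (fun t => om t x n))
  (om_range : forall t x n, 0 <= om t x n <= 1)
  (* u : measurable, and (u(x,n)) i.i.d. Uniform[0,1] independent of omega *)
  (u_meas : forall x n, measurable_fun setT (fun t => u t x n))
  (u_law : forall (A : set (env R)) (s : seq (int * nat)) (B : int * nat -> set R),
      env_measurable A -> uniq s -> (forall c, c \in s -> measurable (B c)) ->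
      P [set t | A (om t) /\ forall c, c \in s -> B c (u t c.1 c.2)]
      = (P (om @^-1` A) * \big[*%E/1%E]_(c <- s) (@lebesgue_measure R) (B c `&` `[0%R, 1%R]))%E)
  (* mu stationary *)
  (stat : forall A : set (env R), env_measurable A ->
      P (om @^-1` [set w : env R | A (env_shift w)]) = P (om @^-1` A))
  (* mu ergodic *)
  (ergo : forall A : set (env R), env_measurable A ->
      [set w : env R | A (env_shift w)] = A -> P (om @^-1` A) = 0%E \/ P (om @^-1` A) = 1%E)
  (* mu elliptic *)
  (ellip : P [set t | forall x n, 0 < om t x n < 1] = 1%E)
  (* mu non-degenerate *)
  (nondeg : P [set t | forall x, nondeg_seq (arrows (om t) (u t) x)] = 1%E)
  (* P^1(S_+) > 0 *)
  (surv1 : (0 < P [set t | Splus (arrows (om t) (u t)) 1])%E)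
  (eps : R) (eps_gt0 : 0 < eps) (y : nat)
  (survy : ((1 - eps)%:E < P [set t | Splus (arrows (om t) (u t)) y])%E) :
  exists ns : nat -> nat, (forall i, (ns i < ns i.+1)%N) /\
    forall i, (P [set t | (y < Zminus (arrows (om t) (u t)) 1 (ns i))%N] < (3 * eps)%:E)%E.
Proof.
exists succn; split => // n.
have mSurvive : measurable [set t | Splus (arrows (om t) (u t)) y] :=
  measurable_joint_env_preimage om_meas u_meas (measurable_Splus (@measurable_arrows R) y).
apply: (le_lt_trans (Zminus_gt_le_extinction om_meas u_meas u_law stat nondeg y n)).
have fin : P [set t | Splus (arrows (om t) (u t)) y] \is a fin_num by rewrite fin_num_measure.
rewrite probability_setC //; move: survy; rewrite -(fineK fin) -EFinB !lte_fin; lra.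
Qed.
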